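(* Let $G=(V,E)$ be a finite simple graph, $\omega\in\mathrm{Acyc}(G)$, $P=P(G,[\omega])$, and $\pi,\pi'$ partitions of $V$. Then: (a) If $\pi$ is closed with respect to the ordinary poset $P(G,\omega)$, then $\pi$ is closed with respect to the toric poset $P(G,[\omega])$. (b) If $\pi\le_V\pi'$ then $\mathrm{cl}^{\mathrm{tor}}_P(\pi)\le_V\mathrm{cl}^{\mathrm{tor}}_P(\pi')$. (c) If $\pi\le_V\pi'\le_V\mathrm{cl}^{\mathrm{tor}}_P(\pi)$ then $\mathrm{cl}^{\mathrm{tor}}_P(\pi')=\mathrm{cl}^{\mathrm{tor}}_P(\pi)$. (d) $\mathrm{cl}^{\mathrm{tor}}_{P(G,[\omega])}(\pi)\le_V\mathrm{cl}_{P(G,\omega)}(\pi)$. Moreover, both (a)'s converse and equality in (d) can fail (e.g. for $G=K_3$, $\omega$ the orientation $3\to 1$, $3\to 2$, $1\to 2$, and $\pi=\{\{1\},\{2,3\}\}$, one has $\mathrm{cl}^{\mathrm{tor}}_{P(G,[\omega])}(\pi)=\pi\ne\{\{1,2,3\}\}=\mathrm{cl}_{P(G,\omega)}(\pi)$).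
   Context: $\le_V$ is the refinement order on partitions of $V$: $\pi\le_V\pi'$ iff every block of $\pi$ is contained in a block of $\pi'$. $\mathrm{Acyc}(G)$, flips, $\equiv$, $[\omega]$, $P(G,\omega)$ (transitive closure of $\omega$), the toric chamber $c(P)\subseteq\mathbb{R}^V/\mathbb{Z}^V$ of $P=P(G,[\omega])$ (a connected component of the complement of the toric hyperplanes $\{x_i\equiv x_j \bmod 1\}$, $\{i,j\}\in E$, corresponding to $[\omega]$), $D_\pi=\{x\in\mathbb{R}^V:x_i=x_j$ for $i,j$ in a common block$\}$ and $D^{\mathrm{tor}}_\pi$ its image in $\mathbb{R}^V/\mathbb{Z}^V$ are as usual. Toric closure: $\mathrm{cl}^{\mathrm{tor}}_P(\pi)$ is the coarsest $\bar\pi\ge_V\pi$ with $\overline{c(P)}\cap D^{\mathrm{tor}}_{\bar\pi}=\overline{c(P)}\cap D^{\mathrm{tor}}_\pi$. Ordinary closure: for a poset $Q=P(G,\omega)$, contracting the blocks of $\pi$ gives a preorder on the blocks; $\mathrm{cl}_Q(\pi)$ is obtained by merging all blocks that are equivalent in this preorder (i.e. lie in a common strongly connected component of $\omega/\!\sim_\pi$), the unique minimal coarsening of $\pi$ whose contraction is acyclic. A partition is closed with respect to $Q$ (resp. $P$) if it equals its closure. *)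

From Stdlib Require Import Reals ClassicalEpsilon Relation_Operators.
From mathcomp Require Import all_boot.

Set Implicit Arguments.
Unset Strict Implicit.
Unset Printing Implicit Defensive.

Section Defs.
Variable V : finType.

Definition simple_graph (E : rel V) : Prop :=
  (forall u v, E u v = E v u) /\ (forall u, ~~ E u u).

Definition orientation (E : rel V) (w : rel V) : Prop :=
  (forall u v, E u v = (w u v || w v u)) /\ (forall u v, w u v -> ~~ w v u).

Definition acyclic_orientation (E : rel V) (w : rel V) : Prop :=
  orientation E w /\ (forall u v, w u v -> ~~ connect w v u).

(* flips: converting a source into a sink (the inverse, sink to source, is
   obtained by symmetry of the generated equivalence). *)
Definition is_source (w : rel V) (v : V) : Prop := forall u, ~~ w u v.

Definition flip_at (w : rel V) (v : V) : rel V :=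
  fun x y => if (x == v) || (y == v) then w y x else w x y.

Definition flip_step (w w' : rel V) : Prop :=
  exists v, is_source w v /\ (forall x y, w' x y = flip_at w v x y).

Definition toric_equiv (w w' : rel V) : Prop :=
  clos_refl_sym_trans (rel V) flip_step w w'.

Definition point_orientation (E : rel V) (x : V -> R) : rel V :=
  fun i j => E i j && (if Rlt_dec (frac_part (x i)) (frac_part (x j))
                       then true else false).

(* Preimage in R^V of the toric chamber c(P(G,[w])): points off all toric
   hyperplanes x_i = x_j mod 1 ({i,j} in E) whose induced orientation lies
   in the toric class [w]. *)
Definition chamber (E : rel V) (w : rel V) (x : V -> R) : Prop :=
  (forall i j, E i j -> frac_part (x i) <> frac_part (x j)) /\
  toric_equiv (point_orientation E x) w.

(* topological closure in R^V (equivalently, preimage of the closure in the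
   torus, as the quotient map is an open covering map) *)
Definition in_closure (S : (V -> R) -> Prop) (x : V -> R) : Prop :=
  forall eps, Rlt 0 eps ->
    exists y, S y /\ forall i, Rlt (Rabs (Rminus (x i) (y i))) eps.

(* preimage of D^tor_pi: x_i = x_j mod 1 whenever i,j share a block *)
Definition in_Dtor (pi : {set {set V}}) (x : V -> R) : Prop :=
  forall B, B \in pi -> forall i j, i \in B -> j \in B ->
    exists k : Z, Rminus (x i) (x j) = IZR k.

Definition is_partition (pi : {set {set V}}) : Prop := partition pi [set: V].

Definition refines (pi pi' : {set {set V}}) : Prop :=
  forall B, B \in pi -> exists2 B', B' \in pi' & B \subset B'.

Definition same_trace (E w : rel V) (pi pi' : {set {set V}}) : Prop :=
  forall x, in_closure (chamber E w) x -> (in_Dtor pi x <-> in_Dtor pi' x).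

Definition is_tor_closure (E w : rel V) (pi pb : {set {set V}}) : Prop :=
  is_partition pb /\ refines pi pb /\ same_trace E w pi pb /\
  (forall p, is_partition p -> refines pi p -> same_trace E w pi p ->
     refines p pb).

Definition tor_cl (E w : rel V) (pi : {set {set V}}) : {set {set V}} :=
  epsilon (inhabits pi) (is_tor_closure E w pi).

Definition tor_closed (E w : rel V) (pi : {set {set V}}) : Prop :=
  tor_cl E w pi = pi.

(* ordinary closure cl_Q(pi), Q = P(G,w): u reaches v in the contracted
   digraph w/~pi iff connect (w or same-block) u v; merge the blocks lying in
   a common strongly connected component. *)
Definition contr_rel (w : rel V) (pi : {set {set V}}) : rel V :=
  [rel u v | w u v || (pblock pi u == pblock pi v)].

Definition ord_cl (w : rel V) (pi : {set {set V}}) : {set {set V}} :=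
  equivalence_partition
    (fun u v => connect (contr_rel w pi) u v && connect (contr_rel w pi) v u)
    [set: V].

Definition ord_closed (w : rel V) (pi : {set {set V}}) : Prop :=
  ord_cl w pi = pi.

End Defs.

(* ---------- the K_3 example (vertices 1,2,3 as 0,1,2 in 'I_3) ---------- *)
Definition K3 : rel 'I_3 := [rel u v | u != v].
Definition w3 : rel 'I_3 :=
  [rel u v | [|| (nat_of_ord u == 2) && (nat_of_ord v == 0),
                 (nat_of_ord u == 2) && (nat_of_ord v == 1) |
                 (nat_of_ord u == 0) && (nat_of_ord v == 1)]].
Definition pi3 : {set {set 'I_3}} :=
  [set [set (inord 0 : 'I_3)]; [set (inord 1 : 'I_3); (inord 2 : 'I_3)]].

From Stdlib Require Import Reals Lra Lia ClassicalEpsilon FunctionalExtensionality Relation_Operators.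
From mathcomp Require Import all_boot.

Set Implicit Arguments.
Unset Strict Implicit.
Unset Printing Implicit Defensive.

(* Call [i] and [j] toric-related when [x i = x j] mod 1 for every point [x] of
   the closed chamber lying on [D^tor_pi]; the toric closure of [pi] is the
   partition into toric classes, from which (b) and (c) are immediate.
   For (d), and hence (a), let [w'] be any acyclic orientation toric-equivalent to
   [w], and suppose [t] is not reachable from [s] in [w'] contracted by [pi].
   The point equal to [1/4] on the vertices reachable from [s] and to [0]
   elsewhere is constant on blocks and weakly increasing along [w']; adding a
   small multiple of the number of [w']-ancestors makes it strictly increasing,
   so it lies in the closed chamber, and it separates [s] from [t] mod 1.
   Hence toric classes lie inside strong components of [w'] contracted by
   [pi].  For [K3] this is applied to the flip of [w3] at its source, with
   respect to which [pi3] is already closed. *)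

Section Partitions.
Variable V : finType.
Implicit Types (p q : {set {set V}}) (r s : rel V).

Lemma partition_block_witness p B : is_partition p -> B \in p -> exists i, i \in B.
Proof.
case/and3P => _ _ p0 pB; have [B0|[i iB]] := set_0Vmem B; last by exists i.
by rewrite -B0 pB in p0.
Qed.

Lemma refines_subset p q : is_partition p -> is_partition q ->
  refines p q -> refines q p -> p \subset q.
Proof.
move=> pP qP pq qp; apply/subsetP => B pB.
have [B' qB' sBB'] := pq B pB; have [B'' pB'' sB'B''] := qp B' qB'.
have [i iB] := partition_block_witness pP pB.
have tp : trivIset p by case/and3P: pP.
have BB'' : B = B''.
  rewrite -(def_pblock tp pB iB).
  exact: def_pblock tp pB'' (subsetP sB'B'' _ (subsetP sBB' _ iB)).
suff -> : B = B' by [].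
by apply/eqP; rewrite eqEsubset sBB' BB''.
Qed.

Lemma refines_antisym p q : is_partition p -> is_partition q ->
  refines p q -> refines q p -> p = q.
Proof.
move=> pP qP pq qp; apply/eqP; rewrite eqEsubset.
by rewrite (refines_subset pP qP pq qp) (refines_subset qP pP qp pq).
Qed.

Lemma in_Dtor_refines p q x : refines p q -> in_Dtor q x -> in_Dtor p x.
Proof.
move=> pq Dq B pB i j iB jB; have [B' qB' sBB'] := pq B pB.
exact: Dq B' qB' i j (subsetP sBB' _ iB) (subsetP sBB' _ jB).
Qed.

Lemma refines_equivalence_partition r s : subrel r s ->
  refines (equivalence_partition r [set: V]) (equivalence_partition s [set: V]).
Proof.
move=> rs B /imsetP [k _ ->].
exists [set y in [set: V] | s k y]; first by apply: imset_f; rewrite inE.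
by apply/subsetP => y; rewrite !inE; apply: rs.
Qed.

End Partitions.

Section Potentials.
Variables (T : finType) (e : rel T) (f : T -> nat).

Lemma connect_nondecreasing : (forall u v, e u v -> f u <= f v) ->
  forall u v, connect e u v -> f u <= f v.
Proof.
move=> mono u v /connectP [p + ->]; elim: p u => [|a p IH] u //= /andP [ua pa].
exact: leq_trans (mono _ _ ua) (IH _ pa).
Qed.

Lemma acyclic_of_potential : (forall u v, e u v -> f u < f v) ->
  forall u v, e u v -> ~~ connect e v u.
Proof.
move=> incr u v uv; apply/negP => /(connect_nondecreasing (fun a b ab => ltnW (incr a b ab))).
by rewrite leqNgt incr.
Qed.

End Potentials.

Definition eqmod1 (a b : R) : Prop := exists k : Z, Rminus a b = IZR k.

Section EqMod1.
Local Open Scope R_scope.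

Lemma eqmod1_refl a : eqmod1 a a.
Proof. by exists 0%Z; rewrite /Rminus Rplus_opp_r. Qed.

Lemma eqmod1_sym a b : eqmod1 a b -> eqmod1 b a.
Proof. by case=> k e; exists (- k)%Z; rewrite opp_IZR -e; ring. Qed.

Lemma eqmod1_trans a b c : eqmod1 a b -> eqmod1 b c -> eqmod1 a c.
Proof.
by case=> k1 e1 [k2 e2]; exists (k1 + k2)%Z; rewrite plus_IZR -e1 -e2; ring.
Qed.

Lemma frac_part_id a : 0 <= a < 1 -> frac_part a = a.
Proof.
move=> [ge0 lt1]; rewrite /frac_part /Int_part.
have -> : up a = 1%Z by symmetry; apply: tech_up; simpl; lra.
simpl; ring.
Qed.

Lemma not_eqmod1 a b : 0 < a - b < 1 -> ~ eqmod1 a b.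
Proof.
move=> [gt0 lt1] [k e]; rewrite e in gt0 lt1.
have := lt_IZR _ _ gt0; have := lt_IZR _ _ lt1; lia.
Qed.

End EqMod1.

Section ToricClosure.
Variables (V : finType) (E w : rel V).
Implicit Types (pi p q : {set {set V}}).

Definition toric_rel pi (i j : V) : Prop :=
  forall x, in_closure (chamber E w) x -> in_Dtor pi x -> eqmod1 (x i) (x j).

Definition toric_relb pi (i j : V) : bool :=
  if excluded_middle_informative (toric_rel pi i j) then true else false.

Lemma toric_relbP pi i j : reflect (toric_rel pi i j) (toric_relb pi i j).
Proof. by rewrite /toric_relb; case: excluded_middle_informative; constructor. Qed.

Lemma toric_rel_sym pi i j : toric_rel pi i j -> toric_rel pi j i.
Proof. by move=> ij x cx Dx; apply: eqmod1_sym (ij x cx Dx). Qed.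

Lemma toric_rel_trans pi i j k :
  toric_rel pi i j -> toric_rel pi j k -> toric_rel pi i k.
Proof. by move=> ij jk x cx Dx; apply: eqmod1_trans (ij x cx Dx) (jk x cx Dx). Qed.

Lemma toric_relb_equiv pi : {in [set: V] & &, equivalence_rel (toric_relb pi)}.
Proof.
move=> i j k _ _ _; split; first by apply/toric_relbP => x _ _; apply: eqmod1_refl.
move/toric_relbP => ij; apply/idP/idP => /toric_relbP ik; apply/toric_relbP.
- exact: toric_rel_trans (toric_rel_sym ij) ik.
- exact: toric_rel_trans ij ik.
Qed.

Definition toric_partition pi := equivalence_partition (toric_relb pi) [set: V].

Lemma toric_partition_partition pi : is_partition (toric_partition pi).
Proof. exact: equivalence_partitionP (toric_relb_equiv pi). Qed.

Lemma toric_relb_antimono p q :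
  (forall x, in_closure (chamber E w) x -> in_Dtor p x -> in_Dtor q x) ->
  subrel (toric_relb q) (toric_relb p).
Proof.
move=> pq i j /toric_relbP qij; apply/toric_relbP => x cx Dx.
exact: qij x cx (pq x cx Dx).
Qed.

Lemma in_Dtor_toric_partition pi x : in_closure (chamber E w) x ->
  in_Dtor pi x -> in_Dtor (toric_partition pi) x.
Proof.
move=> cx Dx B /imsetP [k _ ->] i j; rewrite !inE => /toric_relbP ki /toric_relbP kj.
exact: eqmod1_trans (eqmod1_sym (ki x cx Dx)) (kj x cx Dx).
Qed.

Lemma refines_toric_partition pi p : is_partition p ->
  (forall x, in_closure (chamber E w) x -> in_Dtor pi x -> in_Dtor p x) ->
  refines p (toric_partition pi).
Proof.
move=> pP Dp B pB; have [i iB] := partition_block_witness pP pB.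
exists [set y in [set: V] | toric_relb pi i y]; first by apply: imset_f; rewrite inE.
apply/subsetP => j jB; rewrite !inE; apply/toric_relbP => x cx Dx.
exact: Dp x cx Dx B pB i j iB jB.
Qed.

Lemma toric_partition_tor_closure pi : is_partition pi ->
  is_tor_closure E w pi (toric_partition pi).
Proof.
move=> piP; have piT := refines_toric_partition piP (fun _ _ Dx => Dx).
split; first exact: toric_partition_partition.
split=> //; split.
  by move=> x cx; split; [exact: in_Dtor_toric_partition | exact: in_Dtor_refines].
move=> p pP _ same; apply: refines_toric_partition pP _ => x cx.
exact: (proj1 (same x cx)).
Qed.

Lemma tor_clE pi : is_partition pi -> tor_cl E w pi = toric_partition pi.
Proof.
move=> piP; have tP := toric_partition_tor_closure piP.
have [clP [piCl [sameCl clmax]]] : is_tor_closure E w pi (tor_cl E w pi).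
  exact: epsilon_spec (ex_intro _ _ tP).
have [tpP [piT [sameT tmax]]] := tP.
exact: refines_antisym clP tpP (tmax _ clP piCl sameCl) (clmax _ tpP piT sameT).
Qed.

End ToricClosure.

Lemma contr_rel_same_block (V : finType) (w : rel V) (pi : {set {set V}})
  (B : {set V}) (i j : V) :
  is_partition pi -> B \in pi -> i \in B -> j \in B -> contr_rel w pi i j.
Proof.
case/and3P => _ tp _ piB iB jB.
by rewrite /contr_rel /= (def_pblock tp piB iB) (def_pblock tp piB jB) eqxx orbT.
Qed.

Section CutPoint.
Variables (V : finType) (E w w' : rel V).
Hypotheses (w'_acyc : acyclic_orientation E w') (w'_w : toric_equiv w' w).
Local Open Scope R_scope.

Lemma card_ancestors_lt u v : w' u v ->
  (#|[set a | connect w' a u]| < #|[set a | connect w' a v]|)%N.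
Proof.
move=> uv; apply: proper_card; apply/properP; split.
  by apply/subsetP => a; rewrite !inE => au; apply: connect_trans au (connect1 uv).
by exists v; rewrite !inE ?connect0 //; apply: (proj2 w'_acyc).
Qed.

Lemma chamber_of_increasing y : (forall v, 0 <= y v < 1) ->
  (forall u v, w' u v -> y u < y v) -> chamber E w y.
Proof.
move=> y01 incr; have fy v : frac_part (y v) = y v by apply: frac_part_id.
have [[Ew' _] _] := w'_acyc.
split; first by move=> i j; rewrite Ew' !fy => /orP [] /incr; lra.
suff -> : point_orientation E y = w' by [].
apply: functional_extensionality => i; apply: functional_extensionality => j.
rewrite /point_orientation !fy Ew'; case: Rlt_dec => [lt|nlt]; case wij: (w' i j).
- by [].
- by case wji: (w' j i) => //; have := incr _ _ wji; lra.
- by case: nlt; apply: incr.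
- by rewrite andbF.
Qed.

Lemma in_closure_chamber_of_monotone x : (forall v, 0 <= x v <= / 2) ->
  (forall u v, w' u v -> x u <= x v) -> in_closure (chamber E w) x.
Proof.
move=> x02 mono e e0.
pose r v := INR #|[set a | connect w' a v]|.
pose N := INR #|V|.
pose eps := Rmin e (/ 2) / (N + 1).
have N0 : 0 <= N by apply: pos_INR.
have m0 : 0 < Rmin e (/ 2) by apply: Rmin_glb_lt; lra.
have eps0 : 0 < eps by apply: Rdiv_lt_0_compat; lra.
have epsr v : 0 <= eps * r v < Rmin e (/ 2).
  have rN : r v <= N by apply: le_INR; apply/leP; apply: max_card.
  have r0 : 0 <= r v by apply: pos_INR.
  have : eps * r v <= eps * N by apply: Rmult_le_compat_l; lra.
  have : eps * (N + 1) = Rmin e (/ 2) by rewrite /eps; field; lra.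
  by split; [apply: Rmult_le_pos; lra | lra].
have me := Rmin_l e (/ 2); have mh := Rmin_r e (/ 2).
exists (fun v => x v + eps * r v); split.
  apply: chamber_of_increasing => [v|u v uv].
    by have := x02 v; have := epsr v; lra.
  have : r u < r v by apply: lt_INR; apply/ltP; apply: card_ancestors_lt.
  have := mono _ _ uv; have : 0 < eps by []; nra.
move=> i; apply: Rabs_def1; have := epsr i; lra.
Qed.

Lemma cut_point pi s t : is_partition pi -> ~~ connect (contr_rel w' pi) s t ->
  exists x, [/\ in_closure (chamber E w) x, in_Dtor pi x & ~ eqmod1 (x s) (x t)].
Proof.
move=> piP nst; pose reach := connect (contr_rel w' pi) s.
exists (fun v => if reach v then / 4 else 0); split.
- apply: in_closure_chamber_of_monotone => [v|u v uv]; first by case: (reach v); lra.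
  case ru: (reach u); last by case: (reach v); lra.
  suff -> : reach v by lra.
  by apply: connect_trans ru (connect1 _); rewrite /contr_rel /= uv.
- move=> B piB i j iB jB; suff -> : reach i = reach j by apply: eqmod1_refl.
  by apply/idP/idP => r; apply: connect_trans r (connect1 _);
    apply: contr_rel_same_block piP piB _ _.
- by rewrite /reach connect0 (negbTE nst); apply: not_eqmod1; lra.
Qed.

Lemma toric_rel_connect pi s t : is_partition pi ->
  toric_rel E w pi s t -> connect (contr_rel w' pi) s t.
Proof.
move=> piP st; apply/negPn/negP => nst.
by have [x [cx Dx nx]] := cut_point piP nst; apply: nx (st x cx Dx).
Qed.

Lemma toric_partition_refines_ord_cl pi : is_partition pi ->
  refines (toric_partition E w pi) (ord_cl w' pi).
Proof.
move=> piP; apply: refines_equivalence_partition => i j /toric_relbP ij.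
by apply/andP; split; apply: toric_rel_connect piP _; last apply: toric_rel_sym.
Qed.

End CutPoint.

Section OrdinaryClosure.
Variables (V : finType) (w : rel V).
Implicit Types pi : {set {set V}}.

Lemma ord_cl_partition pi : is_partition (ord_cl w pi).
Proof.
apply: equivalence_partitionP => i j k _ _ _ /=; split; first by rewrite connect0.
case/andP=> ij ji; apply/idP/idP => /andP [ik ki]; apply/andP; split.
- exact: connect_trans ji ik.
- exact: connect_trans ki ij.
- exact: connect_trans ij ik.
- exact: connect_trans ki ji.
Qed.

Lemma refines_ord_cl pi : is_partition pi -> refines pi (ord_cl w pi).
Proof.
move=> piP B piB; have [i iB] := partition_block_witness piP piB.
exists [set y in [set: V] | connect (contr_rel w pi) i y && connect (contr_rel w pi) y i].
  by apply: imset_f; rewrite inE.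
apply/subsetP => j jB; rewrite !inE /=.
by apply/andP; split; apply/connect1/(contr_rel_same_block _ piP piB).
Qed.

End OrdinaryClosure.

Section ToricClosureProperties.
Variables (V : finType) (E w : rel V).
Implicit Types pi : {set {set V}}.

Lemma tor_cl_refines_ord_cl w' pi : acyclic_orientation E w' -> toric_equiv w' w ->
  is_partition pi -> refines (tor_cl E w pi) (ord_cl w' pi).
Proof.
by move=> w'_acyc w'_w piP; rewrite tor_clE //; apply: toric_partition_refines_ord_cl.
Qed.

Lemma ord_closed_tor_closed w' pi : acyclic_orientation E w' -> toric_equiv w' w ->
  is_partition pi -> ord_closed w' pi -> tor_closed E w pi.
Proof.
move=> w'_acyc w'_w piP closed; have := tor_cl_refines_ord_cl w'_acyc w'_w piP.
rewrite closed /tor_closed tor_clE // => tor_pi.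
have piT := refines_toric_partition (E := E) (w := w) piP (fun _ _ Dx => Dx).
exact: refines_antisym (toric_partition_partition E w pi) piP tor_pi piT.
Qed.

Lemma tor_cl_refines pi pi' : is_partition pi -> is_partition pi' ->
  refines pi pi' -> refines (tor_cl E w pi) (tor_cl E w pi').
Proof.
move=> piP pi'P pipi'; rewrite !tor_clE //.
apply/refines_equivalence_partition/toric_relb_antimono => x _.
exact: in_Dtor_refines.
Qed.

Lemma tor_cl_eq_of_refines pi pi' : is_partition pi -> is_partition pi' ->
  refines pi pi' -> refines pi' (tor_cl E w pi) -> tor_cl E w pi' = tor_cl E w pi.
Proof.
move=> piP pi'P pipi'; have := tor_cl_refines piP pi'P pipi'.
rewrite !tor_clE // => tor_mono pi'cl.
apply: (refines_antisym _ _ _ tor_mono); try exact: toric_partition_partition.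
apply/refines_equivalence_partition/toric_relb_antimono => x cx Dx.
exact: in_Dtor_refines pi'cl (in_Dtor_toric_partition cx Dx).
Qed.

End ToricClosureProperties.

Section K3Example.

Definition o0 : 'I_3 := @Ordinal 3 0 isT.
Definition o1 : 'I_3 := @Ordinal 3 1 isT.
Definition o2 : 'I_3 := @Ordinal 3 2 isT.
Definition A0 : {set 'I_3} := [set inord 0].
Definition A12 : {set 'I_3} := [set inord 1; inord 2].

(* [w3] with the source [3] flipped into a sink: 1 -> 2, 1 -> 3, 2 -> 3. *)
Definition w3' : rel 'I_3 :=
  [rel u v | [|| (nat_of_ord u == 0) && (nat_of_ord v == 1),
                 (nat_of_ord u == 0) && (nat_of_ord v == 2) |
                 (nat_of_ord u == 1) && (nat_of_ord v == 2)]].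

Lemma mem_A0 u : (u \in A0) = (nat_of_ord u == 0).
Proof. by rewrite !inE -val_eqE /= inordK. Qed.

Lemma mem_A12 u : (u \in A12) = (nat_of_ord u != 0).
Proof. by rewrite !inE -!val_eqE /= !inordK //; case: u => [[|[|[|?]]] ?]. Qed.

Lemma A0_neq_A12 : A0 != A12.
Proof. by apply/negP => /eqP /setP /(_ o0); rewrite mem_A0 mem_A12. Qed.

Lemma pi3_partition : is_partition pi3.
Proof.
rewrite /is_partition /partition (_ : pi3 = [set A0; A12]) //; apply/and3P; split.
- apply/eqP/setP => u; rewrite in_setT; apply/bigcupP.
  case u0: (nat_of_ord u == 0).
  + by exists A0; rewrite ?mem_A0 // in_set2 eqxx.
  + by exists A12; rewrite ?mem_A12 ?u0 // in_set2 eqxx orbT.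
- apply/trivIsetP => B C; rewrite !in_set2 => /orP [] /eqP -> /orP [] /eqP -> //;
    rewrite ?eqxx // => _; rewrite -setI_eq0; apply/eqP/setP => u;
    by rewrite in_setI in_set0 mem_A0 mem_A12; case: (_ == 0).
- rewrite in_set2; apply/norP; split; apply/eqP => /setP.
  + by move/(_ o0); rewrite in_set0 mem_A0.
  + by move/(_ o1); rewrite in_set0 mem_A12.
Qed.

Lemma pblock_pi3 u : pblock pi3 u = if nat_of_ord u == 0 then A0 else A12.
Proof.
have tp : trivIset pi3 by case/and3P: pi3_partition.
case u0: (nat_of_ord u == 0); apply: def_pblock => //.
- by rewrite !inE eqxx.
- by rewrite mem_A0.
- by rewrite !inE eqxx orbT.
- by rewrite mem_A12 u0.
Qed.

Lemma K3_simple : simple_graph K3.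
Proof. by split=> [u v|u]; rewrite /K3 /= ?eqxx // eq_sym. Qed.

Lemma w3_acyclic : acyclic_orientation K3 w3.
Proof.
split; first by split=> u v; case: u => [[|[|[|?]]] ?]; case: v => [[|[|[|?]]] ?].
apply: (acyclic_of_potential (f := fun u : 'I_3 => if nat_of_ord u == 2 then 0 else u.+1)).
by move=> u v; case: u => [[|[|[|?]]] ?]; case: v => [[|[|[|?]]] ?].
Qed.

Lemma w3'_acyclic : acyclic_orientation K3 w3'.
Proof.
split; first by split=> u v; case: u => [[|[|[|?]]] ?]; case: v => [[|[|[|?]]] ?].
apply: (acyclic_of_potential (f := fun u : 'I_3 => nat_of_ord u)).
by move=> u v; case: u => [[|[|[|?]]] ?]; case: v => [[|[|[|?]]] ?].
Qed.

Lemma w3'_w3 : toric_equiv w3' w3.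
Proof.
apply/rst_sym/rst_step; exists o2; split.
- by case=> [[|[|[|?]]] ?].
- by move=> u v; case: u => [[|[|[|?]]] ?]; case: v => [[|[|[|?]]] ?].
Qed.

(* Along [w3'] nothing leads back into the block [{1}]. *)
Lemma ord_closed_w3'_pi3 : ord_closed w3' pi3.
Proof.
apply: refines_antisym (ord_cl_partition _ _) pi3_partition _ (refines_ord_cl _ pi3_partition).
rewrite -{2}(equivalence_partition_pblock pi3_partition).
apply: refines_equivalence_partition => u v /andP [uv vu].
pose g (a : 'I_3) := nat_of_bool (nat_of_ord a != 0).
have g_mono a b : contr_rel w3' pi3 a b -> g a <= g b.
  rewrite /contr_rel /= !pblock_pi3.
  by case: a => [[|[|[|?]]] ?]; case: b => [[|[|[|?]]] ?]; rewrite //= eq_sym (negbTE A0_neq_A12).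
move: (connect_nondecreasing g_mono uv) (connect_nondecreasing g_mono vu); clear uv vu.
rewrite pblock_pi3 /g.
by case: u => [[|[|[|?]]] ?]; case: v => [[|[|[|?]]] ?]; rewrite //= ?mem_A0 ?mem_A12.
Qed.

Lemma tor_closed_w3_pi3 : tor_cl K3 w3 pi3 = pi3.
Proof. exact: ord_closed_tor_closed w3'_acyclic w3'_w3 pi3_partition ord_closed_w3'_pi3. Qed.

Lemma ord_cl_w3_pi3 : ord_cl w3 pi3 = [set [set: 'I_3]].
Proof.
pose r := contr_rel w3 pi3.
have rE a b : r a b = w3 a b || ((nat_of_ord a == 0) == (nat_of_ord b == 0)).
  rewrite /r /contr_rel /= !pblock_pi3; have A12_A0 := A0_neq_A12; rewrite eq_sym in A12_A0.
  by case: (_ == 0); case: (_ == 0); rewrite ?eqxx ?(negbTE A0_neq_A12) ?(negbTE A12_A0).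
have to0 a : connect r a o0.
  case: a => [[|[|[|?]]] ?] //.
  - by apply: connect1; rewrite rE.
  - by apply: (connect_trans (y := o2)); apply: connect1; rewrite rE.
  - by apply: connect1; rewrite rE.
have from0 a : connect r o0 a.
  case: a => [[|[|[|?]]] ?] //.
  - by apply: connect1; rewrite rE.
  - by apply: connect1; rewrite rE.
  - by apply: (connect_trans (y := o1)); apply: connect1; rewrite rE.
have total a b : connect r a b := connect_trans (to0 a) (from0 b).
apply/setP => B; rewrite inE; apply/imsetP/eqP => [[k _ ->]|->].
- by apply/setP => y; rewrite !inE !total.
- by exists o0; rewrite ?inE //; apply/setP => y; rewrite !inE !total.
Qed.

Lemma pi3_neq_trivial : pi3 <> [set [set: 'I_3]].
Proof.
move=> pi3T; have : A0 \in [set [set: 'I_3]] by rewrite -pi3T in_set2 eqxx.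
by rewrite inE => /eqP /setP /(_ o1); rewrite mem_A0 inE.
Qed.

End K3Example.

Theorem mainTheorem4 (V : finType) (E : rel V) (w : rel V)
  (pi pi' : {set {set V}}) :
  simple_graph E -> acyclic_orientation E w ->
  is_partition pi -> is_partition pi' ->
  (* (a) *)
  (ord_closed w pi -> tor_closed E w pi) /\
  (* (b) *)
  (refines pi pi' -> refines (tor_cl E w pi) (tor_cl E w pi')) /\
  (* (c) *)
  (refines pi pi' -> refines pi' (tor_cl E w pi) ->
     tor_cl E w pi' = tor_cl E w pi) /\
  (* (d) *)
  refines (tor_cl E w pi) (ord_cl w pi) /\
  (* the K_3 example: converse of (a) and equality in (d) fail *)
  (simple_graph K3 /\ acyclic_orientation K3 w3 /\ is_partition pi3 /\
   tor_cl K3 w3 pi3 = pi3 /\ ord_cl w3 pi3 = [set [set: 'I_3]] /\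
   pi3 <> [set [set: 'I_3]]).
Proof.
move=> _ w_acyc piP pi'P; have w_w : toric_equiv w w := rst_refl _ _ _.
split; first exact: ord_closed_tor_closed w_acyc w_w piP.
split; first exact: tor_cl_refines.
split; first exact: tor_cl_eq_of_refines.
split; first exact: tor_cl_refines_ord_cl w_acyc w_w piP.
split; first exact: K3_simple.
split; first exact: w3_acyclic.
split; first exact: pi3_partition.
split; first exact: tor_closed_w3_pi3.
split; first exact: ord_cl_w3_pi3.
exact: pi3_neq_trivial.
Qed.
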